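(* Let $m>n$ be coprime positive integers, $\alpha=\epsilon_i-\delta_j$, $\lambda\in X_\alpha$, $\lambda^+=t_\alpha(\lambda)$, $\Lambda=x(\lambda)$ and $\Lambda^+=\tau_\alpha(\Lambda)$. If $(\Lambda^+,\beta)=0$ for $\beta=\epsilon_k-\delta_j$ with $k\in[n]$, then one of the following holds: (a) $k=i-1$, $\lambda_{n+1-i}=\lambda_{n+2-i}$ and $\beta=\epsilon_{i-1}-\delta_j$; (b) $\alpha=\epsilon_1-\delta_1$, $\beta=\epsilon_n-\delta_1$, $\lambda_1=m$, $\lambda_n=0$, and $(m,1^{n-1})\subseteq\lambda^+$ (i.e. $\lambda^+_1=m$ and $\lambda^+_n\ge1$).
   Context: $X$ is the set of partitions $\lambda=(\lambda_1\ge\dots\ge\lambda_n\ge0)$ with $\lambda_1\le m$, drawn in an $n\times m$ rectangle with rows $\epsilon_1,\dots,\epsilon_n$ top to bottom and columns $\delta_1,\dots,\delta_m$; the diagram consists of boxes $\epsilon_i-\delta_j$ with $j\le\lambda_{n+1-i}$; $\lambda'_j=\#\{i:\lambda_i\ge j\}$. $X_\alpha$: diagrams for which box $\alpha$ is an outer corner; $t_\alpha$ adds that box. $x(\lambda)=(a_1,\dots,a_n|b_1,\dots,b_m)$ with $a_i=m(n-i)+n\lambda_{n+1-i}$, $b_j=n(j-1)+m\lambda'_j$; $\tau_\alpha$ adds $n$ to $a_i$ and $m$ to $b_j$. For $\Lambda=(a|b)$ and $\gamma=\epsilon_p-\delta_q$, $(\Lambda,\gamma)=a_p-b_q$. *)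

From mathcomp Require Import all_boot all_order all_algebra.
Set Implicit Arguments. Unset Strict Implicit. Unset Printing Implicit Defensive.
Import GRing.Theory Num.Theory.

(* A partition lambda = (lambda_1 >= ... >= lambda_n >= 0) with lambda_1 <= m
   is represented by a function lam : nat -> nat; only lam 1, ..., lam n matter
   (1-based indexing as in the paper). *)
Definition is_part (n m : nat) (lam : nat -> nat) : Prop :=
  (forall p, 1 <= p < n -> lam p.+1 <= lam p) /\ (0 < n -> lam 1 <= m).

Definition conjp (n : nat) (lam : nat -> nat) (q : nat) : nat :=
  count (fun p => q <= lam p) (iota 1 n).

(* Box eps_i - delta_j lies in the diagram of lam iff q <= lambda_{n+1-i}. *)
Definition in_diag (n : nat) (lam : nat -> nat) (i j : nat) : Prop :=
  1 <= i <= n /\ 1 <= j /\ j <= lam (n + 1 - i).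

Definition t_alpha (n : nat) (i : nat) (lam : nat -> nat) : nat -> nat :=
  fun p => if p == n + 1 - i then (lam p).+1 else lam p.

(* X_alpha: lam is in X (partition in the n x m rectangle) and box
   alpha = eps_i - delta_j is an outer corner of its diagram, i.e. alpha is a box
   of the rectangle, not in the diagram, and adding it yields again a diagram
   of a partition in X (this forces j = lambda_{n+1-i} + 1). *)
Definition X_alpha (n m i j : nat) (lam : nat -> nat) : Prop :=
  is_part n m lam /\ 1 <= i <= n /\ 1 <= j <= m /\
  j = (lam (n + 1 - i)).+1 /\ is_part n m (t_alpha n i lam).

Definition weight := ((nat -> int) * (nat -> int))%type.

Local Open Scope ring_scope.
Definition x_of (n m : nat) (lam : nat -> nat) : weight :=
  (fun p => ((m * (n - p) + n * lam (n + 1 - p))%N)%:Z,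
   fun q => ((n * (q - 1) + m * conjp n lam q)%N)%:Z).

Definition tau_alpha (n m i j : nat) (L : weight) : weight :=
  (fun p => L.1 p + (if p == i then (n%:Z)%R else 0),
   fun q => L.2 q + (if q == j then m%:Z else 0)).

(* (Lambda, eps_p - delta_q) = a_p - b_q *)
Definition pairing (L : weight) (p q : nat) : int := L.1 p - L.2 q.

From mathcomp Require Import all_boot all_order all_algebra.
From mathcomp Require Import zify ring.
Set Implicit Arguments. Unset Strict Implicit. Unset Printing Implicit Defensive.
Import GRing.Theory Num.Theory.

(* The corner condition j = lambda_{n+1-i} + 1 gives lambda'_j = n - i, so that
   (Lambda^+, beta) = 0 becomes
     m (i - k - 1) = n (lambda_{n+1-i} - lambda_{n+1-k} - [k = i]).
   As m and n are coprime, n divides i - k - 1, which lies in [-n, n - 2]: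
   either i = k + 1 and the two rows have equal length, or i = 1, k = n and
   lambda_1 = lambda_n + m, which together with lambda_1 <= m forces
   lambda_1 = m and lambda_n = 0 (for n = 1 the term [k = i] would instead
   force m = 1, excluded by n < m). *)

Lemma is_part_mono n m lam p q :
  is_part n m lam -> 1 <= p <= q -> q <= n -> lam q <= lam p.
Proof.
move=> [lam_dec _]; elim: q => [|q IHq] pq qn; first lia.
have [->|p_neq] := eqVneq p q.+1; first by [].
apply: leq_trans (lam_dec q _) (IHq _ _); lia.
Qed.

Lemma conjp_succ_row n m lam r :
  is_part n m lam -> 1 <= r <= n -> (1 < r -> lam r < lam r.-1) ->
  conjp n lam (lam r).+1 = r.-1.
Proof.
move=> lamP rn step; rewrite /conjp.
have -> : n = r.-1 + (n - r.-1) by lia.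
rewrite iotaD count_cat (@eq_in_count _ _ predT); last first.
  move=> p; rewrite mem_iota => /andP [p1 pr] /=.
  have := is_part_mono lamP (_ : 1 <= p <= r.-1); have := step; lia.
rewrite count_predT size_iota (@eq_in_count _ _ pred0) ?count_pred0 ?addn0 //.
move=> p; rewrite mem_iota => /andP [rp pn] /=.
have := is_part_mono lamP (_ : 1 <= r <= p); lia.
Qed.

Lemma X_alpha_conjp n m i j lam : X_alpha n m i j lam -> conjp n lam j = n - i.
Proof.
move=> [lamP [i_rng [_ [-> [t_dec _]]]]].
rewrite (conjp_succ_row lamP); [lia | lia |].
move=> r_gt1; have := t_dec (n + 1 - i).-1; rewrite /t_alpha.
rewrite prednK ?eqxx; last lia.
rewrite ifF; last by apply/eqP; lia.
by apply; lia.
Qed.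

Lemma pairing_tau_x n m i j k lam :
  X_alpha n m i j lam -> k <= n ->
  pairing (tau_alpha n m i j (x_of n m lam)) k j =
  (m%:Z * (i%:Z - k%:Z - 1) -
   n%:Z * ((lam (n + 1 - i)%N)%:Z - (lam (n + 1 - k)%N)%:Z - (k == i)%:Z))%R.
Proof.
move=> lamX kn; have conj_j := X_alpha_conjp lamX.
case: lamX => [_ [i_rng [_ [j_def _]]]].
rewrite /pairing /tau_alpha /x_of /= eqxx conj_j j_def subn1 /=.
rewrite !PoszD !PoszM -!subzn; [|lia|lia].
by case: eqP => _ /=; ring.
Qed.

Lemma coprime_mulz_eq_window (m n : nat) (x y : int) :
  coprime m n -> (m%:Z * x = n%:Z * y)%R -> (- n%:Z <= x < n%:Z)%R ->
  (x = 0 /\ y = 0 \/ x = - n%:Z /\ y = - m%:Z)%R.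
Proof.
move=> cop_mn mx_ny x_rng.
have : (n %| x)%Z.
  rewrite -(@Gauss_dvdzr _ m); last by rewrite coprimezE /= coprime_sym.
  by apply/dvdzP; exists y; rewrite mx_ny mulrC.
case/dvdzP=> q x_def; rewrite x_def in mx_ny x_rng *.
have n_gt0 : (0 < n)%N by lia.
have y_def : y = (q * m%:Z)%R.
  apply: (@mulfI _ n%:Z); first by rewrite eqz_nat -lt0n.
  by rewrite -mx_ny; ring.
rewrite y_def; have [->|->] : (q = 0 \/ q = -1)%R by nia.
  by left; rewrite !mul0r.
by right; rewrite !mulN1r.
Qed.

Theorem lemma4p8 (n m i j k : nat) (lam : nat -> nat) :
  0 < n -> n < m -> coprime m n ->
  X_alpha n m i j lam ->
  1 <= k <= n ->
  pairing (tau_alpha n m i j (x_of n m lam)) k j = 0%R ->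
  (k.+1 = i /\ lam (n + 1 - i) = lam (n + 2 - i))
  \/
  (i = 1 /\ j = 1 /\ k = n /\ lam 1 = m /\ lam n = 0 /\
   t_alpha n i lam 1 = m /\ 1 <= t_alpha n i lam n).
Proof.
move=> n_gt0 n_lt_m cop_mn lamX k_rng.
rewrite (pairing_tau_x lamX (_ : k <= n)); last lia.
move/eqP; rewrite subr_eq0 => /eqP mx_ny.
have [[_ lam1_le] [i_rng [_ [j_def _]]]] := lamX.
have x_rng : (- n%:Z <= i%:Z - k%:Z - 1 < n%:Z)%R by lia.
have [[x0 y0] | [xn ym]] := coprime_mulz_eq_window cop_mn mx_ny x_rng.
- left; have ki : k.+1 = i by lia.
  split=> //; rewrite (_ : (n + 2 - i)%N = (n + 1 - k)%N); last lia.
  move: y0; rewrite (_ : (k == i) = false); [lia | apply/eqP; lia].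
- right; have i1 : i = 1 by lia.
  have kn : k = n by lia.
  subst i k; move: ym j_def; rewrite /t_alpha addnK addKn eqxx.
  have [n1|_] := eqVneq n 1; first by subst n; lia.
  move=> ym j_def; have := lam1_le n_gt0; lia.
Qed.
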